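(* For every integer $s\ge 3$ there exists $c>0$ such that for infinitely many positive integers $n$, there is a graph with $n$ vertices and with no stable set of size $s$ such that every clique cover of it has size at least $cn^{2-4/(s+1)}/(\log n)^2$.
   Context: All graphs are finite and simple. A clique $X$ of $G$ covers an edge $uv$ if $u,v\in X$; a clique cover of $G$ is a collection of cliques of $G$ that together cover all edges of $G$, and its size is the number of cliques in it. Logarithms are to base two. *)

From mathcomp Require Import all_boot.
From Stdlib Require Import Reals.

Set Implicit Arguments.
Unset Strict Implicit.
Unset Printing Implicit Defensive.

Definition simple_graph (T : finType) (e : rel T) : Prop :=
  symmetric e /\ irreflexive e.

Definition is_clique (T : finType) (e : rel T) (X : {set T}) : Prop :=
  forall u v, u \in X -> v \in X -> u != v -> e u v.

Definition is_stable (T : finType) (e : rel T) (S : {set T}) : Prop :=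
  forall u v, u \in S -> v \in S -> ~~ e u v.

Definition is_clique_cover (T : finType) (e : rel T) (C : {set {set T}}) : Prop :=
  (forall X, X \in C -> is_clique e X) /\
  (forall u v, e u v -> exists2 X, X \in C & (u \in X) && (v \in X)).

Definition log2 (x : R) : R := (ln x / ln 2)%R.

From mathcomp Require Import all_boot all_order all_algebra.
From mathcomp Require Import zify ring lra.
Set Implicit Arguments. Unset Strict Implicit. Unset Printing Implicit Defensive.
Import Order.TTheory GRing.Theory Num.Theory.

(** Take n = 2^a vertices with a = (s+1)L, and make each pair a non-edge independently
    with probability p = 2^-(2L+2). The asymmetric Lovász Local Lemma, applied to the
    events "S is stable" (|S| = s) and "S is a clique" (|S| = k, where k - 1 = 4(a+1)/p),
    gives a graph with neither. Every s-set of it spans an edge, so double counting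
    yields at least n(n-1)/(s(s-1)) edges, whereas a clique has fewer than k vertices and
    covers fewer than C(k-1,2) edges. A clique cover therefore has at least
    n^2/(s^2 (k-1)^2) >= 2^((2s-2)L)/(1024 s^2 a^2) members, and
    2^((2s-2)L) = n^(2-4/(s+1)), a = log n. *)

Lemma card_le_mul_cover (X Y : finType) (A : {set X}) (P : {set Y})
    (r : X -> Y -> bool) m :
  (forall a, a \in A -> exists2 t, t \in P & r a t) ->
  (forall t, t \in P -> #|[set a in A | r a t]| <= m) -> #|A| <= #|P| * m.
Proof.
move=> covA degP; rewrite -sum1_card.
apply: (@leq_trans (\sum_(a in A) \sum_(t in P) r a t)).
  by apply: leq_sum => a /covA[t tP rat]; rewrite (bigD1 t) //= rat.
rewrite exchange_big -sum_nat_const; apply: leq_sum => t /degP; apply: leq_trans.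
rewrite -sum1_card big_mkcond [X in _ <= X]big_mkcond; apply: leq_sum => a _.
by rewrite inE; case: (a \in A); case: (r a t).
Qed.

Lemma exists_subset_card (T : finType) (A : {set T}) k : k <= #|A| ->
  exists2 S : {set T}, S \subset A & #|S| = k.
Proof.
move=> kA; exists [set x in take k (enum A)].
  by apply/subsetP => x; rewrite inE => /mem_take; rewrite mem_enum.
rewrite cardsE (card_uniqP (take_uniq _ (enum_uniq _))) size_takel //.
by rewrite -cardE.
Qed.

Definition pairs (T : finType) (S : {set T}) : {set {set T}} :=
  [set t : {set T} | t \subset S & #|t| == 2].

Lemma pairsP (T : finType) (S t : {set T}) :
  t \in pairs S -> exists u v, [/\ u != v, t = [set u; v], u \in S & v \in S].
Proof.
rewrite inE => /andP[tS /cards2P[u [v [uv tE]]]]; exists u, v.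
by split=> //; apply: (subsetP tS); rewrite tE !inE eqxx ?orbT.
Qed.

Lemma card_supersets_le (T : finType) (t : {set T}) m : #|t| = 2 ->
  #|[set j : {set T} | (#|j| == m) && (t \subset j)]| <= 'C(#|T| - 2, m - 2).
Proof.
move=> card_t; set A := [set j | _].
have inj : {in A &, injective (fun j => j :\: t)}.
  move=> j1 j2; rewrite !inE => /andP[_ /setIidPr tj1] /andP[_ /setIidPr tj2] eqD.
  by rewrite -(setID j1 t) -(setID j2 t) eqD tj1 tj2.
have -> : #|T| - 2 = #|~: t| by rewrite cardsCs setCK card_t.
rewrite -(card_in_imset inj) -cards_draws.
apply/subset_leq_card/subsetP => _ /imsetP[j /setIdP[/eqP card_j tj] ->].
rewrite inE cardsD (setIidPr tj) card_j card_t eqxx andbT.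
by apply/subsetP => u; rewrite !inE => /andP[].
Qed.

Lemma leq_expn2r m n e : m <= n -> m ^ e <= n ^ e.
Proof. by case: e => // e; rewrite leq_exp2r. Qed.

Lemma ffact_le_expn n m : n ^_ m <= n ^ m.
Proof.
elim: m n => // m IH n; rewrite ffactnS expnS leq_mul2l.
by apply/orP; right; apply: leq_trans (IH _) (leq_expn2r _ (leq_pred n)).
Qed.

Lemma bin_le_expn n m : 'C(n, m) <= n ^ m.
Proof.
by apply: leq_trans (ffact_le_expn n m); rewrite -bin_ffact leq_pmulr ?fact_gt0.
Qed.

Lemma bin2_mul2 m : 'C(m, 2) * 2 = m * (m - 1).
Proof. by rewrite mulnC (mul_bin_left m 1) bin1 mulnC. Qed.

Lemma bin_mul_pairs n s : 2 <= s -> s <= n ->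
  'C(n, s) * (s * (s - 1)) = n * (n - 1) * 'C(n - 2, s - 2).
Proof.
move=> s_ge2 s_le_n.
have [s' ->] : exists s', s = s'.+2 by exists (s - 2); lia.
have [n' ->] : exists n', n = n'.+2 by exists (n - 2); lia.
rewrite !subSS !subn0 -mulnA (mul_bin_diag n'.+1 s') [RHS]mulnCA.
by rewrite [n'.+2 * _](mul_bin_diag n'.+2 s'.+1) mulnC [s'.+2 * s'.+1]mulnC mulnA.
Qed.

Section GraphOfNonedges.
Variables (T : finType) (s k : nat) (nonedge : {ffun {set T} -> bool}).
Hypothesis edge_in_s_sets :
  forall S : {set T}, #|S| = s -> exists2 t, t \in pairs S & ~~ nonedge t.
Hypothesis nonedge_in_k_sets :
  forall S : {set T}, #|S| = k -> exists2 t, t \in pairs S & nonedge t.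

Definition graph_of_nonedges (u v : T) : bool := (u != v) && ~~ nonedge [set u; v].
Local Notation e := graph_of_nonedges.

Definition edge_pairs : {set {set T}} := [set t : {set T} | (#|t| == 2) && ~~ nonedge t].

Lemma graph_of_nonedges_simple : simple_graph e.
Proof.
split=> [u v|u]; last by rewrite /e eqxx.
by rewrite /e eq_sym setUC.
Qed.

Lemma graph_of_nonedges_no_stable (S : {set T}) : #|S| = s -> ~ is_stable e S.
Proof.
move=> /edge_in_s_sets[t /pairsP[u [v [uv -> uS vS]]] nonedge_uv] stableS.
by have := stableS u v uS vS; rewrite /e uv nonedge_uv.
Qed.

Lemma clique_card_lt (X : {set T}) : is_clique e X -> #|X| < k.
Proof.
move=> cliqueX; rewrite ltnNge; apply/negP => /exists_subset_card[S SX /nonedge_in_k_sets].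
case=> _ /pairsP[u [v [uv -> uS vS]]] nonedge_uv.
by have := cliqueX u v (subsetP SX u uS) (subsetP SX v vS) uv; rewrite /e uv nonedge_uv.
Qed.

Lemma edge_pairs_card_ge : 2 <= s <= #|T| ->
  #|T| * (#|T| - 1) <= #|edge_pairs| * (s * (s - 1)).
Proof.
case/andP=> s_ge2 s_le_T.
have cover : 'C(#|T|, s) <= #|edge_pairs| * 'C(#|T| - 2, s - 2).
  rewrite -card_draws; apply: (@card_le_mul_cover _ _ [set S : {set T} | #|S| == s]
    edge_pairs (fun S t => t \subset S)).
    move=> S; rewrite inE => /eqP/edge_in_s_sets[t].
    rewrite inE => /andP[tS card_t] nonedge_t.
    by exists t; rewrite // inE card_t nonedge_t.
  move=> t /setIdP[/eqP card_t _]; apply: leq_trans (card_supersets_le s card_t).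
  by apply/subset_leq_card/subsetP => S; rewrite !inE.
rewrite -(@leq_pmul2r 'C(#|T| - 2, s - 2)) ?bin_gt0 ?leq_sub2r //.
by rewrite -bin_mul_pairs // mulnAC leq_mul2r cover orbT.
Qed.

Lemma clique_cover_card_ge (C : {set {set T}}) : is_clique_cover e C ->
  2 <= s <= #|T| -> #|T| * (#|T| - 1) <= #|C| * 'C(k.-1, 2) * (s * (s - 1)).
Proof.
move=> [cliqueC coverC] s_bounds; apply: leq_trans (edge_pairs_card_ge s_bounds) _.
rewrite leq_mul2r; apply/orP; right.
apply: (@card_le_mul_cover _ _ edge_pairs C (fun t X => t \subset X)).
  move=> t /setIdP[/cards2P[u [v [uv ->]]] nonedge_uv].
  have [X XC /andP[uX vX]] : exists2 X, X \in C & (u \in X) && (v \in X).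
    by apply: coverC; rewrite /e uv nonedge_uv.
  by exists X => //; apply/subsetP => w; rewrite !inE => /orP[]/eqP->.
move=> X /cliqueC/clique_card_lt card_X; apply: leq_trans (_ : #|pairs X| <= _).
  by apply/subset_leq_card/subsetP => t; rewrite !inE => /andP[/andP[-> _] ->].
by rewrite cards_draws leq_bin2l // -ltnS (ltn_predK card_X).
Qed.

End GraphOfNonedges.

Section LocalLemma.
Local Open Scope ring_scope.
Variables (R : realFieldType) (Omega : finType) (w : Omega -> R).
Hypothesis w_ge0 : forall o, 0 <= w o.

Definition prob (A : {set Omega}) : R := \sum_(o in A) w o.

Lemma prob_ge0 (A : {set Omega}) : 0 <= prob A.
Proof. exact: sumr_ge0. Qed.

Lemma prob_setID (A B : {set Omega}) : prob A = prob (A :&: B) + prob (A :\: B).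
Proof. exact: big_setID. Qed.

Lemma subset_prob_le (A B : {set Omega}) : A \subset B -> prob A <= prob B.
Proof.
move=> sAB; rewrite [prob B](prob_setID _ A) (setIidPr sAB) lerDl.
exact: prob_ge0.
Qed.

Variables (I : finType) (E : I -> {set Omega}) (G : I -> {set I}) (x : I -> R).

Definition avoid (S : {set I}) : {set Omega} :=
  [set o | [forall i in S, o \notin E i]].

Lemma avoidS (S T : {set I}) : S \subset T -> avoid T \subset avoid S.
Proof.
move=> sST; apply/subsetP => o; rewrite !inE => /forall_inP avT.
by apply/forall_inP => i /(subsetP sST); apply: avT.
Qed.

Lemma avoid0 : avoid set0 = setT.
Proof. by apply/setP => o; rewrite !inE; apply/forall_inP => i; rewrite inE. Qed.

Lemma avoidU1 j (S : {set I}) : avoid (j |: S) = avoid S :\: E j.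
Proof.
apply/setP => o; rewrite !inE andbC; apply/forall_inP/andP => [av|[/forall_inP av oj] i].
  by split; [apply/forall_inP => i iS|]; apply: av; rewrite !inE ?iS ?orbT ?eqxx.
by rewrite !inE => /predU1P[-> //|]; apply: av.
Qed.

(* [P(E j | avoid V) <= x j], with the division multiplied out. *)
Definition cond_prob_le j (V : {set I}) := prob (E j :&: avoid V) <= x j * prob (avoid V).

Lemma prob_avoidU1_ge j (V : {set I}) :
  cond_prob_le j V -> (1 - x j) * prob (avoid V) <= prob (avoid (j |: V)).
Proof.
rewrite /cond_prob_le avoidU1 (prob_setID (avoid V) (E j)) setIC mulrBl mul1r.
lra.
Qed.

Hypothesis x_ge0 : forall i, 0 <= x i.
Hypothesis x_le1 : forall i, x i <= 1.

Lemma prod_prob_avoidU_ge (U S : {set I}) : [disjoint U & S] ->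
  (forall (V : {set I}) j,
     j \in U -> j \notin V -> V \subset U :|: S -> cond_prob_le j V) ->
  \prod_(j in U) (1 - x j) * prob (avoid S) <= prob (avoid (U :|: S)).
Proof.
move: {2}#|U| (leqnn #|U|) => m; elim: m U => [|m IH] U.
  by rewrite leqn0 cards_eq0 => /eqP -> _ _; rewrite big_set0 mul1r set0U.
move=> cardU disjUS condU; have [->|[j jU]] := set_0Vmem U.
  by rewrite big_set0 mul1r set0U.
have sUjU : U :\ j \subset U := subsetDl U [set j].
have jNUS : j \notin U :\ j :|: S by rewrite !inE eqxx (disjointFr disjUS jU).
have IHj : \prod_(i in U :\ j) (1 - x i) * prob (avoid S) <= prob (avoid (U :\ j :|: S)).
  apply: IH => [|| V i /setD1P[_ iU] iV sV].
  - by move: cardU; rewrite (cardsD1 j U) jU.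
  - exact: disjointWl disjUS.
  by apply: condU => //; apply: subset_trans sV (setSU _ sUjU).
rewrite (bigD1 j jU) /= -mulrA (eq_bigl (mem (U :\ j))); last first.
  by move=> i; rewrite !inE andbC.
rewrite -{2}(setD1K jU) -setUA; apply: le_trans (prob_avoidU1_ge _) => //.
  by apply: ler_wpM2l IHj; rewrite subr_ge0.
by apply: condU => //; apply: setSU.
Qed.

Hypothesis E_indep : forall i (S : {set I}), [disjoint S & i |: G i] ->
  prob (E i :&: avoid S) <= prob (E i) * prob (avoid S).
Hypothesis prob_E_le : forall i, prob (E i) <= x i * \prod_(j in G i) (1 - x j).

(* Split S into S1 = S :&: G i and S2 = S :\: G i: E i is independent of [avoid S2],
   and adding back S1 costs at most the factor [\prod_(j in S1) (1 - x j)]. *)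
Lemma cond_prob_le_step (S : {set I}) i : i \notin S ->
  (forall (V : {set I}) j, j \notin V -> V \subset S -> j \in S -> cond_prob_le j V) ->
  cond_prob_le i S.
Proof.
move=> iNS condS; set S1 := S :&: G i; set S2 := S :\: G i.
have disjS2 : [disjoint S2 & i |: G i].
  rewrite -setI_eq0; apply/eqP/setP => j; rewrite !inE.
  by case: (j =P i) => [->|_]; case: (j \in G i); rewrite ?(negbTE iNS) ?andbF.
have prod_le : \prod_(j in G i) (1 - x j) <= \prod_(j in S1) (1 - x j).
  rewrite [X in X <= _](big_setID S1) /= (setIidPr (subsetIr _ _)) ler_piMr //.
    by apply: prodr_ge0 => j _; rewrite subr_ge0.
  by apply: prodr_ile1 => j _; rewrite subr_ge0 x_le1 lerBlDr lerDl x_ge0.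
have avoid_S : \prod_(j in S1) (1 - x j) * prob (avoid S2) <= prob (avoid S).
  rewrite -(setID S (G i)); apply: prod_prob_avoidU_ge => [|V j /setIP[jS _] jV sV].
    rewrite -setI_eq0; apply/eqP/setP => j; rewrite !inE.
    by case: (j \in G i); rewrite ?andbF.
  by apply: condS => //; rewrite -(setID S (G i)).
rewrite /cond_prob_le; apply: le_trans (_ : prob (E i :&: avoid S2) <= _).
  by apply/subset_prob_le/setIS/avoidS/subsetDl.
apply: le_trans (E_indep disjS2) _.
apply: le_trans (ler_wpM2r (prob_ge0 _) (prob_E_le i)) _.
rewrite -mulrA; apply: ler_wpM2l => //; apply: le_trans avoid_S.
by apply: ler_wpM2r prod_le; apply: prob_ge0.
Qed.

Lemma cond_prob_avoid_le (S : {set I}) i : i \notin S -> cond_prob_le i S.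
Proof.
move: {2}#|S| (leqnn #|S|) => m; elim: m S i => [|m IH] S i cardS iNS;
  apply: cond_prob_le_step => // V j jNV sVS jS.
  by move: cardS; rewrite leqn0 cards_eq0 => /eqP Se; rewrite Se inE in jS.
apply: IH => //; rewrite -ltnS; apply: leq_trans cardS; apply: proper_card.
by rewrite properEneq sVS andbT; apply: contraNneq jNV => ->.
Qed.

Theorem lovasz_local_lemma :
  \prod_i (1 - x i) * prob setT <= prob (avoid setT).
Proof.
have := @prod_prob_avoidU_ge setT set0; rewrite setU0 avoid0.
rewrite (eq_bigl predT) => [|i]; last by rewrite inE.
apply=> [|V j _ jV _]; first by rewrite -setI_eq0 setI0.
exact: cond_prob_avoid_le.
Qed.

Corollary lovasz_local_lemma_exists : (forall i, x i < 1) -> 0 < prob setT ->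
  exists o, forall i, o \notin E i.
Proof.
move=> x_lt1 probT_gt0; have : 0 < prob (avoid setT).
  apply: lt_le_trans lovasz_local_lemma; apply: mulr_gt0 probT_gt0.
  by apply: prodr_gt0 => i _; rewrite subr_gt0.
have [-> | [o]] := set_0Vmem (avoid setT); first by rewrite /prob big_set0 ltxx.
by rewrite inE => /forall_inP avo; exists o => i; apply: avo; rewrite inE.
Qed.

End LocalLemma.

Section BernoulliProduct.
Local Open Scope ring_scope.
Variables (R : realFieldType) (T : finType) (p : R).
Hypotheses (p_ge0 : 0 <= p) (p_le1 : p <= 1).

Definition bias (b : bool) : R := if b then p else 1 - p.
Definition bernoulli_weight (f : {ffun T -> bool}) : R := \prod_t bias (f t).
Local Notation Pr := (prob bernoulli_weight).

Lemma bias_ge0 b : 0 <= bias b.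
Proof. by case: b; rewrite /= ?subr_ge0. Qed.

Lemma sum_bias : \sum_b bias b = 1.
Proof. by rewrite big_bool /= addrC subrK. Qed.

Lemma bernoulli_weight_ge0 f : 0 <= bernoulli_weight f.
Proof. by apply: prodr_ge0 => t _; apply: bias_ge0. Qed.

Lemma sum_bernoulli_weight : \sum_f bernoulli_weight f = 1.
Proof.
rewrite /bernoulli_weight -(bigA_distr_bigA (fun _ => bias)) /=.
by apply: big1 => t _; apply: sum_bias.
Qed.

Lemma prob_bernoulliT : Pr setT = 1.
Proof.
by rewrite -sum_bernoulli_weight; apply: eq_bigl => f; rewrite inE.
Qed.

Definition const_on (D : {set T}) (b0 : bool) : {set {ffun T -> bool}} :=
  [set f : {ffun T -> bool} | [forall t in D, f t == b0]].

Lemma prob_bernoulli_const (D : {set T}) (b0 : bool) :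
  Pr (const_on D b0) = bias b0 ^+ #|D|.
Proof.
pose h t b := if (t \in D) && (b != b0) then 0 else bias b.
transitivity (\sum_(f : {ffun T -> bool}) \prod_t h t (f t)).
  rewrite /prob big_mkcond /=; apply: eq_bigr => f _; rewrite inE.
  have [/forall_inP fD | /forall_inPn[t tD ft]] := boolP [forall t in D, f t == b0].
    by apply: eq_bigr => t _; rewrite /h; case: (boolP (t \in D)) => //= /fD ->.
  by rewrite (bigD1 t) //= /h tD ft mul0r.
rewrite -(bigA_distr_bigA h) /= (bigID (mem D)) /= [X in _ * X]big1 ?mulr1.
  rewrite -prodr_const; apply: eq_bigr => t tD; rewrite big_bool {}/h tD.
  by case: b0; rewrite /= ?addr0 ?add0r.
by move=> t tD; rewrite /h (negbTE tD) sum_bias.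
Qed.

Definition depends_on (D : {set T}) (A : {set {ffun T -> bool}}) :=
  forall f g : {ffun T -> bool}, {in D, f =1 g} -> (f \in A) = (g \in A).

Definition splice (D : {set T}) (f g : {ffun T -> bool}) : {ffun T -> bool} :=
  [ffun t => if t \in D then f t else g t].

Lemma splice_swapK (D : {set T}) :
  involutive (fun fg => (splice D fg.1 fg.2, splice D fg.2 fg.1)).
Proof. by case=> f g; congr pair; apply/ffunP => t; rewrite !ffunE; case: (t \in D). Qed.

Lemma bernoulli_weight_splice (D : {set T}) f g :
  bernoulli_weight (splice D f g) * bernoulli_weight (splice D g f) =
  bernoulli_weight f * bernoulli_weight g.
Proof.
rewrite -!big_split /=; apply: eq_bigr => t _; rewrite !ffunE.
by case: (t \in D); rewrite // mulrC.
Qed.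

Lemma prob_bernoulli_indep (D : {set T}) (A C : {set {ffun T -> bool}}) :
  depends_on D A -> depends_on (~: D) C -> Pr (A :&: C) = Pr A * Pr C.
Proof.
(* Swapping the D-coordinates of two colourings is a weight-preserving involution
   on pairs, and it turns [(f \in A) && (g \in C)] into [f \in A :&: C]. *)
move=> depA depC.
pose F f g := if (f \in A) && (g \in C)
  then bernoulli_weight f * bernoulli_weight g else 0.
have -> : Pr A * Pr C = \sum_fg F fg.1 fg.2.
  rewrite -pair_bigA /prob mulr_suml big_mkcond /=; apply: eq_bigr => f _.
  rewrite mulr_sumr big_mkcond /= /F; case: (f \in A) => /=; last first.
    by rewrite big1.
  by apply: eq_bigr => g _; case: (g \in C); rewrite ?mulr0.
rewrite (reindex_inj (inv_inj (splice_swapK D))) /=.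
rewrite -(pair_bigA _ (fun f g => F (splice D f g) (splice D g f))) /prob big_mkcond /=.
apply: eq_bigr => f _; rewrite inE /F.
have spliceA g : (splice D f g \in A) = (f \in A).
  by apply: depA => t tD; rewrite ffunE tD.
have spliceC g : (splice D g f \in C) = (f \in C).
  by apply: depC => t; rewrite inE ffunE => /negbTE ->.
under eq_bigr do rewrite spliceA spliceC.
case: ifP => _; last by rewrite big1.
under eq_bigr do rewrite bernoulli_weight_splice.
by rewrite -mulr_sumr sum_bernoulli_weight mulr1.
Qed.

End BernoulliProduct.

Section RandomNonedges.
Local Open Scope ring_scope.
Variables (R : realFieldType) (T : finType) (s k : nat) (p xs xk : R).
Hypothesis s_neq_k : s != k.
Hypotheses (p_ge0 : 0 <= p) (p_le1 : p <= 1).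
Hypotheses (xs_ge0 : 0 <= xs) (xs_lt1 : xs < 1) (xk_ge0 : 0 <= xk) (xk_lt1 : xk < 1).
Local Notation n := #|T|.
Hypothesis stable_bound : p ^+ 'C(s, 2) <=
  xs * (1 - xs) ^+ ('C(s, 2) * 'C(n - 2, s - 2)) * (1 - xk) ^+ 'C(n, k).
Hypothesis clique_bound : (1 - p) ^+ 'C(k, 2) <=
  xk * (1 - xs) ^+ ('C(k, 2) * 'C(n - 2, s - 2)) * (1 - xk) ^+ 'C(n, k).

Local Notation colouring := {ffun {set T} -> bool}.
Local Notation Pr := (prob (bernoulli_weight p)).

(* [f t] means that the pair t is a non-edge: an s-set is bad when it is stable,
   a k-set when it is a clique. *)
Definition bad_event (S : {set T}) : {set colouring} :=
  if #|S| == s then const_on (pairs S) true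
  else if #|S| == k then const_on (pairs S) false
  else set0.

Definition dependents (S : {set T}) : {set {set T}} :=
  [set S' | (S' != S) && (1 < #|S :&: S'|)%N].

Definition event_bound (S : {set T}) : R :=
  if #|S| == s then xs else if #|S| == k then xk else 0.

Lemma bad_event_depends (S : {set T}) : depends_on (pairs S) (bad_event S).
Proof.
move=> f g fg; rewrite /bad_event; case: ifP => _; [|case: ifP => _]; rewrite !inE //;
  by apply: eq_forallb_in => t /fg ->.
Qed.

Lemma avoid_depends (S : {set T}) (V : {set {set T}}) : [disjoint V & S |: dependents S] ->
  depends_on (~: pairs S) (avoid bad_event V).
Proof.
move=> disjV f g fg; rewrite !inE; apply: eq_forallb_in => S' S'V; congr negb.
apply: bad_event_depends => t tS'; apply: fg; rewrite inE.
apply: contraFN (disjointFr disjV S'V).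
rewrite !inE => /andP[tS /eqP card_t]; case: eqP => //= _.
by rewrite -card_t subset_leq_card // subsetI tS; case/setIdP: tS'.
Qed.

Lemma card_dependents_s (S : {set T}) :
  (#|[set S' in dependents S | #|S'| == s]| <= 'C(#|S|, 2) * 'C(n - 2, s - 2))%N.
Proof.
rewrite -cards_draws.
apply: (@card_le_mul_cover _ _ [set S' in dependents S | #|S'| == s] (pairs S)
  (fun S' t => t \subset S')).
  move=> S'; rewrite !inE => /andP[/andP[_ /exists_subset_card[t]]].
  rewrite subsetI => /andP[tS tS'] card_t _.
  by exists t; rewrite // inE tS card_t.
move=> t; rewrite inE => /andP[_ /eqP card_t].
apply: leq_trans (card_supersets_le s card_t); apply/subset_leq_card/subsetP => S'.
by rewrite !inE => /andP[/andP[_ ->] ->].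
Qed.

Lemma card_dependents_k (S : {set T}) :
  (#|[set S' in dependents S | #|S'| == k]| <= 'C(n, k))%N.
Proof.
by rewrite -card_draws; apply/subset_leq_card/subsetP => S'; rewrite !inE => /andP[_ ->].
Qed.

Lemma prod_dependents_ge (S : {set T}) :
  (1 - xs) ^+ ('C(#|S|, 2) * 'C(n - 2, s - 2)) * (1 - xk) ^+ 'C(n, k)
  <= \prod_(S' in dependents S) (1 - event_bound S').
Proof.
have xs_01 : 0 <= 1 - xs <= 1 by rewrite subr_ge0 ltW //= lerBlDr lerDl.
have xk_01 : 0 <= 1 - xk <= 1 by rewrite subr_ge0 ltW //= lerBlDr lerDl.
rewrite (bigID (fun S' : {set T} => #|S'| == s)) /=.
rewrite [X in _ <= _ * X](bigID (fun S' : {set T} => #|S'| == k)) /=.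
rewrite [X in _ <= _ * (_ * X)]big1 ?mulr1; last first.
  by move=> S' /andP[/andP[_ /negbTE S's] /negbTE S'k]; rewrite /event_bound S's S'k subr0.
have -> : \prod_(S' in dependents S | #|S'| == s) (1 - event_bound S') =
    (1 - xs) ^+ #|[set S' in dependents S | #|S'| == s]|.
  rewrite -prodr_const; apply: eq_big => [S'|S' /andP[_ /eqP card_S']].
    by rewrite !inE.
  by rewrite /event_bound card_S' eqxx.
have -> : \prod_(S' | (S' \in dependents S) && (#|S'| != s) && (#|S'| == k))
    (1 - event_bound S') = (1 - xk) ^+ #|[set S' in dependents S | #|S'| == k]|.
  rewrite -prodr_const; apply: eq_big => [S'|S' /andP[/andP[_ /negbTE S's] S'k]].
    rewrite !inE; case: (#|S'| =P k) => [->|_]; rewrite ?andbF ?andbT //.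
    by rewrite [k == s]eq_sym s_neq_k andbT.
  by rewrite /event_bound S's S'k.
case/andP: xs_01 => xs0 xs1; case/andP: xk_01 => xk0 xk1.
by apply: ler_pM; rewrite ?exprn_ge0 // ler_wiXn2l // ?card_dependents_s ?card_dependents_k.
Qed.

Lemma prob_bad_event_le (S : {set T}) :
  Pr (bad_event S) <= event_bound S * \prod_(S' in dependents S) (1 - event_bound S').
Proof.
have prod_ge := prod_dependents_ge S; rewrite /bad_event /event_bound.
have [/eqP card_S | _] := ifP; last have [/eqP card_S | _] := ifP.
- rewrite prob_bernoulli_const cards_draws card_S /bias; apply: le_trans stable_bound _.
  by rewrite card_S in prod_ge; rewrite -mulrA ler_wpM2l.
- rewrite prob_bernoulli_const cards_draws card_S /bias; apply: le_trans clique_bound _.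
  by rewrite card_S in prod_ge; rewrite -mulrA ler_wpM2l.
by rewrite /prob big_set0 mul0r.
Qed.

Lemma exists_nonedges : exists nonedge : colouring,
  (forall S : {set T}, #|S| = s -> exists2 t, t \in pairs S & ~~ nonedge t) /\
  (forall S : {set T}, #|S| = k -> exists2 t, t \in pairs S & nonedge t).
Proof.
have bound_ge0 S : 0 <= event_bound S by rewrite /event_bound; do 2?case: ifP.
have bound_lt1 S : event_bound S < 1 by rewrite /event_bound; do 2?case: ifP.
have [||f avoid_f] := lovasz_local_lemma_exists (bernoulli_weight_ge0 p_ge0 p_le1)
  bound_ge0 (fun S => ltW (bound_lt1 S)) _ prob_bad_event_le bound_lt1.
- move=> S V disjV; rewrite (prob_bernoulli_indep p (@bad_event_depends S)) //.
  exact: avoid_depends.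
- by rewrite prob_bernoulliT.
exists f; split=> S card_S; have := avoid_f S; rewrite /bad_event card_S eqxx.
  by rewrite inE => /forall_inPn[t tS ft]; exists t; case: (f t) ft.
rewrite eq_sym (negbTE s_neq_k) inE => /forall_inPn[t tS ft].
by exists t; case: (f t) ft.
Qed.

End RandomNonedges.

Section Bernoulli.
Local Open Scope ring_scope.
Variable R : realFieldType.

Lemma bernoulli_ineq (h : R) m : -1 <= h -> 1 + h *+ m <= (1 + h) ^+ m.
Proof.
move=> h_ge; elim: m => [|m IH]; first by rewrite expr0 addr0.
have h1_ge0 : 0 <= 1 + h by rewrite -lerBlDl sub0r.
rewrite exprS; apply: le_trans _ (ler_wpM2l h1_ge0 IH).
rewrite mulrSr mulrDl mul1r mulrDr mulr1.
have : 0 <= h * (h *+ m) by rewrite mulrnAr mulrn_wge0 // -expr2 sqr_ge0.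
lra.
Qed.

Lemma expr1B_ge (z : R) m : z <= 1 -> 1 - z *+ m <= (1 - z) ^+ m.
Proof. by move=> z_le1; rewrite -mulNrn; apply: bernoulli_ineq; rewrite lerN2. Qed.

Lemma expr1B_mul_le1 (z : R) m : 0 <= z <= 1 -> (1 - z) ^+ m * (1 + z *+ m) <= 1.
Proof.
case/andP=> z_ge0 z_le1; have z1_ge0 : 0 <= 1 - z by rewrite subr_ge0.
apply: le_trans (ler_wpM2l (exprn_ge0 m z1_ge0) (bernoulli_ineq m _)) _; first lra.
rewrite -exprMn exprn_ile1 //; first by apply: mulr_ge0; lra.
by have := sqr_ge0 z; rewrite expr2 mulrDr mulr1 mulrBl mul1r; lra.
Qed.

Lemma ler_wpXn2r (x y : R) m : 0 <= x -> x <= y -> x ^+ m <= y ^+ m.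
Proof. by move=> x_ge0 xy; apply: lerXn2r; rewrite // nnegrE (le_trans x_ge0). Qed.

End Bernoulli.

(* In the application q = 1/p, cs = C(s,2), ck = C(k,2), d = C(n-2,s-2) counts the
   s-sets through a pair, M = C(n,k) bounds the k-sets, and e = ak. The weights are
   chosen so that (1 - xs)^(cs d) and (1 - xk)^M are at least 1/2. *)
Section LocalLemmaWeights.
Local Open Scope ring_scope.
Variables (R : realFieldType) (q cs ck d M e : nat).
Hypotheses (q_ge16 : (16 <= q)%N) (cs_gt0 : (0 < cs)%N) (cs_le_q : (cs <= q)%N).
Hypotheses (d_le : (8 * d <= q ^ cs.-1)%N) (M_le : (M <= 2 ^ e)%N).
Hypothesis ck_ge : (2 * q * (e + 2) <= ck)%N.

Definition nonedge_prob : R := q%:R^-1.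
Definition stable_weight : R := 4 * nonedge_prob ^+ cs.
Definition clique_weight : R := (2 ^+ e.+1)^-1.
Local Notation p := nonedge_prob.
Local Notation xs := stable_weight.
Local Notation xk := clique_weight.

Let q_gt0 : (0 < q)%N.
Proof. exact: leq_trans q_ge16. Qed.

Lemma nonedge_prob_gt0 : 0 < p.
Proof. by rewrite invr_gt0 ltr0n. Qed.

Lemma nonedge_prob_le : p <= 1 / 16.
Proof. by rewrite div1r lef_pV2 ?posrE ?ltr0n // (ler_nat R 16). Qed.

Lemma stable_weight_ge0 : 0 <= xs.
Proof. by rewrite mulr_ge0 // exprn_ge0 // ltW // nonedge_prob_gt0. Qed.

Lemma mul_stable_weight_le : d%:R * xs <= p / 2.
Proof.
have pX : p ^+ cs.-1 = ((q ^ cs.-1)%:R)^-1 by rewrite natrX exprVn.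
have dp : d%:R * p ^+ cs.-1 <= 1 / 8.
  rewrite pX ler_pdivlMr ?ltr0n // mulrAC ler_pdivrMr ?ltr0n ?expn_gt0 ?q_gt0 //.
  by rewrite mul1r -natrM ler_nat mulnC.
have p_ge0 := ltW nonedge_prob_gt0.
rewrite /stable_weight -(prednK cs_gt0) exprS.
have := ler_wpM2l (mulr_ge0 (ler0n R 4) p_ge0) dp; lra.
Qed.

Lemma stable_weight_lt1 : xs < 1.
Proof.
have p_gt0 := nonedge_prob_gt0; have p_le := nonedge_prob_le.
have : p ^+ cs <= p ^+ 1 by apply: ler_wiXn2l => //; [exact: ltW | lra].
rewrite /stable_weight expr1; lra.
Qed.

Lemma clique_weight_gt0 : 0 < xk.
Proof. by rewrite invr_gt0 exprn_gt0. Qed.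

Lemma clique_weight_lt1 : xk < 1.
Proof. by rewrite invf_lt1 ?exprn_gt0 // exprn_egt1 ?ltr1n. Qed.

Lemma half_le_expr_stable : 1 / 2 <= (1 - xs) ^+ (cs * d).
Proof.
apply: le_trans (expr1B_ge _ (ltW stable_weight_lt1)).
have cs_p : cs%:R * p <= 1 by rewrite ler_pdivrMr ?ltr0n // mul1r ler_nat.
have := ler_wpM2l (ler0n R cs) mul_stable_weight_le.
by rewrite -[xs *+ _]mulr_natl natrM -mulrA; lra.
Qed.

Lemma half_le_expr_clique : 1 / 2 <= (1 - xk) ^+ M.
Proof.
apply: le_trans (expr1B_ge _ (ltW clique_weight_lt1)).
have : M%:R * xk <= 1 / 2.
  rewrite ler_pdivrMr ?exprn_gt0 // exprS mulrA div1r mulVf ?pnatr_eq0 // mul1r.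
  by rewrite -natrX ler_nat.
rewrite -[xk *+ _]mulr_natl; lra.
Qed.

Lemma stable_weight_bound : p ^+ cs <= xs * (1 - xs) ^+ (cs * d) * (1 - xk) ^+ M.
Proof.
have := half_le_expr_stable; have := half_le_expr_clique.
move: ((1 - xs) ^+ _) ((1 - xk) ^+ _) => a b b_ge a_ge.
have pcs_ge0 : 0 <= p ^+ cs by rewrite exprn_ge0 // ltW // nonedge_prob_gt0.
have ab : 1 / 4 <= a * b by have := ler_pM _ _ a_ge b_ge; rewrite !div1r; lra.
by rewrite /stable_weight -!mulrA; have := ler_wpM2l pcs_ge0 ab; lra.
Qed.

Lemma expr_half_nonedge_prob_le : (1 - p / 2) ^+ (2 * q) <= 1 / 2.
Proof.
have p_gt0 := nonedge_prob_gt0; have p_le := nonedge_prob_le.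
have half_p : 0 <= p / 2 <= 1 by apply/andP; split; lra.
have := expr1B_mul_le1 (2 * q) half_p.
have -> : p / 2 *+ (2 * q) = 1.
  by rewrite -mulr_natl natrM /nonedge_prob; field; rewrite pnatr_eq0 -lt0n q_gt0.
lra.
Qed.

Lemma clique_weight_bound : (1 - p) ^+ ck <= xk * (1 - xs) ^+ (ck * d) * (1 - xk) ^+ M.
Proof.
have p_gt0 := nonedge_prob_gt0; have p_le := nonedge_prob_le.
set z := 1 - p / 2; have z_ge0 : 0 <= z by rewrite /z; lra.
have z2 : (1 - p) ^+ ck <= z ^+ ck * z ^+ ck.
  rewrite -exprMn; apply: ler_wpXn2r; first lra.
  by have := sqr_ge0 p; rewrite /z expr2; lra.
have z_xs : z ^+ ck <= (1 - xs) ^+ (ck * d).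
  rewrite mulnC exprM; apply: ler_wpXn2r => //; apply: le_trans (expr1B_ge _ _).
    by have := mul_stable_weight_le; rewrite -mulr_natl /z; lra.
  exact: ltW stable_weight_lt1.
have z_xk : z ^+ ck <= xk / 2.
  apply: le_trans (ler_wiXn2l z_ge0 _ ck_ge) _; first by rewrite /z; lra.
  rewrite exprM; apply: le_trans (ler_wpXn2r _ _ expr_half_nonedge_prob_le) _.
    exact: exprn_ge0.
  by rewrite /clique_weight expr_div_n expr1n addn2 div1r -invfM -exprSr.
have xkA_ge0 : 0 <= xk * (1 - xs) ^+ (ck * d).
  by rewrite mulr_ge0 ?exprn_ge0 ?subr_ge0 ?ltW ?clique_weight_gt0 ?stable_weight_lt1.
apply: le_trans z2 _; apply: le_trans (_ : xk / 2 * (1 - xs) ^+ (ck * d) <= _).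
  by apply: ler_pM => //; apply: exprn_ge0.
have := ler_wpM2l xkA_ge0 half_le_expr_clique.
by rewrite mulrAC mulrA; lra.
Qed.

End LocalLemmaWeights.

Section Construction.
Variables s L : nat.

Definition log_vertex_count := (s + 1) * L.
Definition vertex_count := 2 ^ log_vertex_count.
Definition inv_nonedge_prob := 2 ^ (2 * L + 2).
Definition clique_size := 4 * inv_nonedge_prob * (log_vertex_count + 1) + 1.

Local Notation a := log_vertex_count.
Local Notation n := vertex_count.
Local Notation q := inv_nonedge_prob.
Local Notation k := clique_size.

Lemma inv_nonedge_prob_ge16 : 0 < L -> 16 <= q.
Proof. by move=> L_gt0; rewrite (_ : 16 = 2 ^ 4) // leq_pexp2l //; lia. Qed.

Lemma log_vertex_count_gt : 0 < L -> s < a.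
Proof. by rewrite /log_vertex_count; nia. Qed.

Lemma vertex_count_ge2 : 0 < L -> 2 <= n.
Proof. by move/log_vertex_count_gt => ?; rewrite (_ : 2 = 2 ^ 1) // leq_pexp2l //; lia. Qed.

Lemma s_lt_clique_size : 0 < L -> s < k.
Proof.
move/log_vertex_count_gt; have : 0 < q := expn_gt0 _ _; rewrite /clique_size; nia.
Qed.

Lemma bin2_le_inv_nonedge_prob : s <= L -> 'C(s, 2) <= q.
Proof.
move=> s_le_L; have := bin2_mul2 s; have := ltn_expl s (isT : 1 < 2).
have : 2 ^ s * 2 ^ s <= q by rewrite -expnD leq_pexp2l //; lia.
nia.
Qed.

Lemma bin_vertex_count_le : 3 <= s -> 8 * 'C(n - 2, s - 2) <= q ^ ('C(s, 2)).-1.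
Proof.
move=> s_ge3; have bin2s := bin2_mul2 s.
apply: (@leq_trans (2 ^ 3 * 2 ^ (a * (s - 2)))).
  rewrite leq_mul2l /= expnM; apply: leq_trans (bin_le_expn _ _) (leq_expn2r _ _).
  exact: leq_subr.
by rewrite -expnD -expnM leq_pexp2l //; rewrite /log_vertex_count; nia.
Qed.

Lemma bin_clique_size_le : 'C(n, k) <= 2 ^ (a * k).
Proof. by rewrite expnM; apply: bin_le_expn. Qed.

Lemma bin2_clique_size_ge : 2 * q * (a * k + 2) <= 'C(k, 2).
Proof.
by have := bin2_mul2 k; have : 0 < q := expn_gt0 _ _; rewrite /clique_size; nia.
Qed.

End Construction.

Theorem exists_graph_large_clique_covers s L : 3 <= s -> s <= L ->
  exists e : rel 'I_(vertex_count s L), simple_graph e /\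
    (forall S : {set 'I_(vertex_count s L)}, #|S| = s -> ~ is_stable e S) /\
    (forall C : {set {set 'I_(vertex_count s L)}}, is_clique_cover e C ->
       vertex_count s L * (vertex_count s L - 1) <=
       #|C| * 'C((clique_size s L).-1, 2) * (s * (s - 1))).
Proof.
move=> s_ge3 s_le_L; have L_gt0 : 0 < L by lia.
set n := vertex_count s L; set k := clique_size s L; set q := inv_nonedge_prob L.
have q_ge16 := inv_nonedge_prob_ge16 L_gt0.
have cs_gt0 : 0 < 'C(s, 2) by rewrite bin_gt0; lia.
have d_le : 8 * 'C(#|'I_n| - 2, s - 2) <= q ^ ('C(s, 2)).-1.
  by rewrite card_ord; apply: bin_vertex_count_le.
have M_le : 'C(#|'I_n|, k) <= 2 ^ (log_vertex_count s L * k).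
  by rewrite card_ord bin_clique_size_le.
have s_neq_k : s != k by rewrite neq_ltn s_lt_clique_size.
have p_le1 : (nonedge_prob rat q <= 1)%R by have := nonedge_prob_le rat q_ge16; lra.
have [f [edge_in nonedge_in]] := exists_nonedges s_neq_k
  (ltW (nonedge_prob_gt0 rat q_ge16)) p_le1
  (stable_weight_ge0 rat 'C(s, 2) q_ge16) (stable_weight_lt1 rat q_ge16 cs_gt0)
  (ltW (clique_weight_gt0 rat _)) (clique_weight_lt1 rat _)
  (stable_weight_bound rat q_ge16 cs_gt0 (bin2_le_inv_nonedge_prob s_le_L) d_le M_le)
  (clique_weight_bound rat q_ge16 cs_gt0 d_le M_le (bin2_clique_size_ge s L)).
exists (graph_of_nonedges f); split; first exact: graph_of_nonedges_simple.
split=> [S|C cover]; first exact: graph_of_nonedges_no_stable.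
have := clique_cover_card_ge edge_in nonedge_in cover; rewrite card_ord; apply.
rewrite (ltnW s_ge3) /=; apply/ltnW/(ltn_trans (log_vertex_count_gt s L_gt0)).
exact: ltn_expl.
Qed.

Lemma pow2_le_clique_cover s L c : 0 < s -> 0 < L ->
  vertex_count s L * (vertex_count s L - 1) <=
    c * 'C((clique_size s L).-1, 2) * (s * (s - 1)) ->
  2 ^ ((2 * s - 2) * L) <= c * (1024 * s ^ 2 * log_vertex_count s L ^ 2).
Proof.
(* n^2 = 2^(4L) 2^((2s-2)L) and (k-1)^2 = 2^(4L) 256 (a+1)^2, so 2^(4L) cancels. *)
move=> s_gt0 L_gt0 cover; set a := log_vertex_count s L; set F := 2 ^ (4 * L).
have a_gt0 : 0 < a by rewrite muln_gt0 addn1.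
have nn : vertex_count s L * vertex_count s L = F * 2 ^ ((2 * s - 2) * L).
  by rewrite -!expnD /log_vertex_count; congr (2 ^ _); nia.
have qq : inv_nonedge_prob L * inv_nonedge_prob L = 16 * F.
  by rewrite -expnD /F (_ : 16 = 2 ^ 4) // -expnD; congr (2 ^ _); lia.
have kk : (clique_size s L).-1 ^ 2 = F * (256 * (a + 1) ^ 2).
  by rewrite /clique_size addn1 /=; nia.
have bin : 'C((clique_size s L).-1, 2) * 2 <= (clique_size s L).-1 ^ 2.
  by rewrite bin2_mul2 leq_mul2l leq_subr orbT.
rewrite -(leq_pmul2l (expn_gt0 2 (4 * L))) -/F -nn.
set n := vertex_count s L; set k1 := (clique_size s L).-1.
have n_ge2 := vertex_count_ge2 s L_gt0.
apply: (@leq_trans (2 * (c * 'C(k1, 2) * (s * (s - 1))))).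
  apply: (@leq_trans (2 * (n * (n - 1)))); last by rewrite leq_mul2l cover orbT.
  by rewrite mulnCA leq_mul2l; apply/orP; right; lia.
apply: (@leq_trans (c * k1 ^ 2 * s ^ 2)).
  rewrite [X in X <= _](_ : _ = c * ('C(k1, 2) * 2) * (s * (s - 1))); last by ring.
  by apply: leq_mul (leq_mul (leqnn c) bin) _; rewrite -mulnn leq_mul2l leq_subr orbT.
have a1 : 256 * (a + 1) ^ 2 <= 1024 * a ^ 2 by nia.
rewrite kk [X in _ <= X](_ : _ = c * (F * (1024 * a ^ 2)) * s ^ 2); last by ring.
by rewrite leq_mul2r leq_mul2l leq_mul2l a1 !orbT.
Qed.

From Stdlib Require Import Reals Lra.

Lemma INR_expn m e : INR (expn m e) = (INR m ^ e)%R.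
Proof. by elim: e => // e IH; rewrite expnS mulnE mult_INR IH. Qed.

Lemma INR_2 : INR 2 = 2%R.
Proof. rewrite /=; Lra.lra. Qed.

Lemma log2_pow2 m : log2 (INR (expn 2 m)) = INR m.
Proof.
have ln2_gt0 : (0 < ln 2)%R by rewrite -ln_1; apply: ln_increasing; Lra.lra.
by rewrite INR_expn INR_2 /log2 ln_pow; [field; Lra.lra | Lra.lra].
Qed.

Lemma Rpower_pow2 m x : Rpower (INR (expn 2 m)) x = Rpower 2 (INR m * x).
Proof. by rewrite INR_expn INR_2 -Rpower_pow ?Rpower_mult //; Lra.lra. Qed.

Lemma Rpower_vertex_count s L : (0 < s)%N ->
  Rpower (INR (vertex_count s L)) (2 - 4 / (INR s + 1)) = INR (expn 2 ((2 * s - 2) * L)).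
Proof.
move=> s_gt0; rewrite Rpower_pow2 INR_expn INR_2 -Rpower_pow; last Lra.lra.
have s_ge1 : (1 <= INR s)%R by apply: (le_INR 1); apply/ssrnat.leP.
congr Rpower; rewrite /log_vertex_count !mulnE addnE subnE !mult_INR minus_INR.
  by rewrite mult_INR plus_INR INR_1 INR_2; field; Lra.lra.
by apply/ssrnat.leP; rewrite -mulnE; lia.
Qed.

Lemma INR_le_scaled_div (E c s a : nat) : (0 < s)%N -> (0 < a)%N ->
  (E <= c * (1024 * expn s 2 * expn a 2))%N ->
  (/ (1024 * INR s ^ 2) * INR E / INR a ^ 2 <= INR c)%R.
Proof.
move=> /ssrnat.ltP/lt_0_INR s_gt0 /ssrnat.ltP/lt_0_INR a_gt0 /ssrnat.leP/le_INR.
rewrite !mulnE !mult_INR (_ : INR 1024 = 1024%R); last by rewrite INR_IZR_INZ.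
set D := (1024 * (INR s * INR s) * (INR a * INR a))%R => E_le.
have D_gt0 : (0 < D)%R by rewrite /D; repeat apply: Rmult_lt_0_compat; Lra.lra.
apply: (Rmult_le_reg_r _ _ _ D_gt0).
have -> : (/ (1024 * INR s ^ 2) * INR E / INR a ^ 2 * D = INR E)%R.
  by rewrite /D; field; Lra.lra.
exact: E_le.
Qed.

Theorem mainTheorem10 :
  forall s : nat, (3 <= s)%N ->
  exists c : R, (0 < c)%R /\
    forall N : nat, exists n : nat, (N <= n)%N /\ (2 <= n)%N /\
      exists e : rel 'I_n,
        simple_graph e /\
        (forall S : {set 'I_n}, #|S| = s -> ~ is_stable e S) /\
        (forall C : {set {set 'I_n}}, is_clique_cover e C ->
           (c * Rpower (INR n) (2 - 4 / (INR s + 1)) / (log2 (INR n)) ^ 2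
              <= INR #|C|)%R).
Proof.
move=> s s_ge3; have s_gt0 : (0 < s)%N by apply: leq_trans s_ge3.
exists (/ (1024 * INR s ^ 2))%R; split.
  apply: Rinv_0_lt_compat; apply: Rmult_lt_0_compat; first Lra.lra.
  by apply: pow_lt; apply: lt_0_INR; apply/ssrnat.ltP.
move=> N; set L := maxn N s; have s_le_L : (s <= L)%N := leq_maxr N s.
have L_gt0 : (0 < L)%N := leq_trans s_gt0 s_le_L.
exists (vertex_count s L); split; last split; last first.
- have [e [e_simple [e_no_stable e_covers]]] :=
    exists_graph_large_clique_covers s_ge3 s_le_L.
  exists e; split=> //; split=> // C /e_covers /(pow2_le_clique_cover s_gt0 L_gt0) bound.
  rewrite Rpower_vertex_count // log2_pow2.
  by apply: INR_le_scaled_div => //; rewrite muln_gt0 addn1.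
- exact: vertex_count_ge2.
apply: leq_trans (leq_maxl N s) (leq_trans _ (ltnW (ltn_expl _ (ltnSn 1)))).
by rewrite /log_vertex_count leq_pmull // addn1.
Qed.
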